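(* Coefficientwise modulo $64$, $$\frac{f_2^8}{f_1^{16}}\equiv 21+12\varphi(-q)^2+16\varphi(q^2)+16\varphi(q^4)\pmod{64}.$$
   Context: For a positive integer $k$ let $f_k:=\prod_{m=1}^\infty(1-q^{mk})$, as a formal power series in $q$. Let $\varphi(q):=\sum_{n=-\infty}^{\infty}q^{n^2}$ (Ramanujan's theta function). Congruences between integer power series are meant coefficientwise. *)

From mathcomp Require Import all_boot all_order all_algebra.
Set Implicit Arguments. Unset Strict Implicit. Unset Printing Implicit Defensive.
Import GRing.Theory Num.Theory.
Local Open Scope ring_scope.

Definition fps := nat -> int.

Definition fconst (c : int) : fps := fun n => if n == 0%N then c else 0.
Definition fadd (a b : fps) : fps := fun n => a n + b n.
Definition fscale (c : int) (a : fps) : fps := fun n => c * a n.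
Definition fmul (a b : fps) : fps := fun n => \sum_(i < n.+1) a i * b (n - i)%N.
Definition fpow (a : fps) (e : nat) : fps := iter e (fmul a) (fconst 1).
(* Multiplicative inverse of a series with constant term 1:
   1/a = sum_j (1 - a)^j; since 1 - a has zero constant term, only j <= n
   contributes to the coefficient of q^n. *)
Definition finv (a : fps) : fps :=
  fun n => \sum_(j < n.+1) fpow (fun m => fconst 1 m - a m) j n.
Definition fdiv (a b : fps) : fps := fmul a (finv b).

(* f_k = prod_{m>=1} (1 - q^{mk}); the coefficient of q^n only involves the
   factors with m <= n. *)
Definition f_ (k : nat) : fps :=
  fun n => (\prod_(1 <= m < n.+1) (1 - 'X^(m * k)) : {poly int})`_n.

(* Ramanujan's phi(q) = sum_{j in Z} q^{j^2}: coefficient of q^n is the number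
   of integers j with j^2 = n (necessarily |j| <= n). *)
Definition phi : fps :=
  fun n => (\sum_(i < (2 * n).+1) ((i%:Z - n%:Z) ^+ 2 == n%:Z))%:R.

Definition fneg (a : fps) : fps := fun n => (-1) ^+ n * a n.
(* substitution q -> q^k  (k > 0) *)
Definition fdil (k : nat) (a : fps) : fps :=
  fun n => if (k %| n)%N then a (n %/ k)%N else 0.

(* Everything is computed modulo q^M, on integer polynomials. The q-binomial
   theorem at Q = q^2, y = q^(2N-1), z = -1 yields a finite Jacobi triple
   product, whose truncation is Gauss' identity f_1^2 / f_2 = phi(-q) (recall
   f_1 = (q;q^2)_oo f_2); hence the left-hand side is 1 / phi(-q)^8.
   Write phi(-q) = 1 + 2u, phi(q^2) = 1 + 2u_2 and phi(q^4) = 1 + 2u_4 with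
   partial theta sums u, u_2, u_4. The square of a sum agrees with the sum of
   the squares modulo 2, so u^2 = u_2 and u_2^2 = u_4 modulo 2, and the claim
   reduces to the congruence
   (1 + 2u)^8 (53 + 12 (1 + 2u)^2 + 32 u^2 + 32 u^4) = 1 (mod 64) in Z[u]. *)

From Pilot Require Import Defs.
From mathcomp Require Import all_boot all_order all_algebra.
From mathcomp Require Import zify ring.
Import GRing.Theory Num.Theory.
Set Implicit Arguments. Unset Strict Implicit.
Local Open Scope ring_scope.

Lemma coef_natrM (R : nzRingType) n (p : {poly R}) i : (n%:R * p)`_i = n%:R * p`_i.
Proof. by rewrite !mulr_natl coefMn. Qed.

Section TruncatedEquality.
Variable R : nzRingType.
Implicit Types p q r : {poly R}.

Definition trunc_eq N p q := forall i, (i < N)%N -> p`_i = q`_i.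

Lemma trunc_eq_refl N p : trunc_eq N p p. Proof. by []. Qed.

Lemma trunc_eq_sym N p q : trunc_eq N p q -> trunc_eq N q p.
Proof. by move=> h i /h. Qed.

Lemma trunc_eq_trans N p q r : trunc_eq N p q -> trunc_eq N q r -> trunc_eq N p r.
Proof. by move=> h1 h2 i hi; rewrite h1 ?h2. Qed.

Lemma trunc_eqD N p q p' q' :
  trunc_eq N p p' -> trunc_eq N q q' -> trunc_eq N (p + q) (p' + q').
Proof. by move=> h1 h2 i hi; rewrite !coefD h1 ?h2. Qed.

Lemma trunc_eqM N p q p' q' :
  trunc_eq N p p' -> trunc_eq N q q' -> trunc_eq N (p * q) (p' * q').
Proof.
move=> h1 h2 i hi; rewrite !coefM; apply: eq_bigr => j _.
by rewrite h1 ?h2 //; have := ltn_ord j; lia.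
Qed.

Lemma trunc_eqX N p p' e : trunc_eq N p p' -> trunc_eq N (p ^+ e) (p' ^+ e).
Proof. by move=> h; elim: e => [|e IH] //; rewrite !exprS; apply: trunc_eqM. Qed.

Lemma trunc_eqMr1 N p a : trunc_eq N a 1 -> trunc_eq N (p * a) p.
Proof. by move=> h; have := trunc_eqM (@trunc_eq_refl N p) h; rewrite mulr1. Qed.

Lemma trunc_eq_sum N (I : eqType) (s : seq I) (F G : I -> {poly R}) :
  {in s, forall i, trunc_eq N (F i) (G i)} ->
  trunc_eq N (\sum_(i <- s) F i) (\sum_(i <- s) G i).
Proof. by move=> h j hj; rewrite !coef_sum; apply: eq_big_seq => i /h ->. Qed.

Lemma trunc_eq_prod1 N (I : eqType) (s : seq I) (F : I -> {poly R}) :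
  {in s, forall i, trunc_eq N (F i) 1} -> trunc_eq N (\prod_(i <- s) F i) 1.
Proof.
move=> h; rewrite big_seq; apply: (big_ind (trunc_eq N ^~ 1)) => //.
by move=> p q hp hq; apply: trunc_eq_trans (trunc_eqMr1 _ hq) hp.
Qed.

Lemma trunc_eq_subXn N e : (N <= e)%N -> trunc_eq N (1 - 'X^e) 1.
Proof. by move=> hN i hi; rewrite coefB coefXn (ltn_eqF (leq_trans hi hN)) subr0. Qed.

Lemma trunc_eq_mulXn0 N e p : (N <= e)%N -> trunc_eq N ('X^e * p) 0.
Proof. by move=> hN i hi; rewrite coefXnM coef0 (leq_trans hi hN). Qed.

End TruncatedEquality.

Section TruncatedInverse.
Context {R : comNzRingType}.
Implicit Types p a b c : {poly R}.

Lemma coef_expr_small p j i : p`_0 = 0 -> (i < j)%N -> (p ^+ j)`_i = 0.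
Proof.
move=> p0 ij; have -> : p = drop_poly 1 p * 'X.
  rewrite -[LHS](poly_take_drop 1) [take_poly 1 p](_ : _ = 0) ?add0r //.
  by apply/polyP => -[|k]; rewrite coef_take_poly coef0 //= p0.
by rewrite exprMn coefMXn ij.
Qed.

Lemma geometric_inverse N p : p`_0 = 1 ->
  trunc_eq N ((\sum_(j < N) (1 - p) ^+ j) * p) 1.
Proof.
move=> p0; have -> : (\sum_(j < N) (1 - p) ^+ j) * p = 1 - (1 - p) ^+ N.
  by rewrite -[(1 - p) ^+ N](subrK 1) subrX1; ring.
by move=> i hi; rewrite coefB coef_expr_small ?subr0 // coefB coef1 p0 subrr.
Qed.

Lemma trunc_eq_cancel N a b c : c`_0 = 1 ->
  trunc_eq N (a * c) (b * c) -> trunc_eq N a b.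
Proof.
move=> c0 h; set c' := \sum_(j < N) (1 - c) ^+ j.
have hc := geometric_inverse (N := N) c0; rewrite -/c' in hc.
apply: trunc_eq_trans (trunc_eq_sym (trunc_eqMr1 a hc)) _.
apply: trunc_eq_trans (trunc_eqMr1 b hc); rewrite [a * _]mulrCA [b * _]mulrCA.
exact: trunc_eqM (trunc_eq_refl c') h.
Qed.

End TruncatedInverse.

Section QBinomial.
Context {R : comNzRingType} (Q : R).

Fixpoint qbinom n k {struct n} : R :=
  match n, k with
  | _, 0 => 1
  | 0, _.+1 => 0
  | n'.+1, k'.+1 => qbinom n' k'.+1 + Q ^+ (n' - k') * qbinom n' k'
  end.

Lemma qbinom0 n : qbinom n 0 = 1. Proof. by case: n. Qed.

Lemma qbinomS n k : qbinom n.+1 k.+1 = qbinom n k.+1 + Q ^+ (n - k) * qbinom n k.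
Proof. by []. Qed.

Lemma qbinom_small n k : (n < k)%N -> qbinom n k = 0.
Proof.
elim: n k => [|n IH] [|k] // lt_nk.
by rewrite qbinomS !IH ?mulr0 ?addr0 //; lia.
Qed.

Lemma qbinomnn n : qbinom n n = 1.
Proof.
by elim: n => // n IH; rewrite qbinomS qbinom_small // subnn expr0 mul1r IH add0r.
Qed.

Theorem qbinomial_theorem (y z : R) n :
  \prod_(0 <= i < n) (y + z * Q ^+ i) =
  \sum_(0 <= k < n.+1) z ^+ k * y ^+ (n - k) * Q ^+ 'C(k, 2) * qbinom n k.
Proof.
elim: n => [|n IH]; first by rewrite big_geq // big_nat1 !expr0 qbinom0 !mulr1.
rewrite big_nat_recr //= IH mulrDr !big_distrl /= [RHS]big_nat_recl //.
under [X in _ = _ + X]eq_bigr => k _ do rewrite mulrDr.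
rewrite big_split /= addrA; congr (_ + _).
  rewrite big_nat_recl // [X in _ = _ + X]big_nat_recr //=.
  rewrite (qbinom_small (ltnSn n)) mulr0.
  rewrite addr0 !qbinom0 bin0n !expr0 !mul1r !mulr1 subn0 -exprSr; congr (_ + _).
  apply: eq_big_nat => k /andP [_ lt_kn].
  by rewrite subSS -(subnSK lt_kn) (exprSr y); ring.
apply: eq_big_nat => k /andP [_ lt_kn].
have -> : Q ^+ n = Q ^+ k * Q ^+ (n - k) by rewrite -exprD subnKC // ltnW.
by rewrite subSS binS bin1 exprD exprS; ring.
Qed.

Definition qpoch m := \prod_(0 <= i < m) (1 - Q ^+ i.+1).

Lemma qpoch0 : qpoch 0 = 1. Proof. by rewrite /qpoch big_geq. Qed.

Lemma qpochS m : qpoch m.+1 = qpoch m * (1 - Q ^+ m.+1).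
Proof. by rewrite /qpoch big_nat_recr. Qed.

Lemma qbinom_qpoch n k : (k <= n)%N -> qbinom n k * qpoch k * qpoch (n - k) = qpoch n.
Proof.
elim: n k => [|n IH] [|k] le_kn //; rewrite ?qbinom0 ?qpoch0 ?mul1r ?subn0 //.
rewrite qbinomS subSS; case: (ltngtP k n) => [lt_kn|lt_nk|<-]; last 2 first.
- by move: le_kn; rewrite ltnS leqNgt lt_nk.
- by rewrite qbinom_small // qbinomnn subnn expr0 qpoch0 add0r !mul1r mulr1.
have e : (n - k = (n - k.+1).+1)%N by lia.
have IHk1 := IH k.+1 lt_kn; have IHk := IH k (ltnW lt_kn).
rewrite qpochS in IHk1; rewrite e qpochS -e in IHk.
rewrite e !qpochS -e.
have -> : Q ^+ n.+1 = Q ^+ (n - k) * Q ^+ k.+1 by rewrite -exprD; congr (_ ^+ _); lia.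
move: (qbinom n k.+1) (qbinom n k) (Q ^+ (n - k)) (Q ^+ k.+1) IHk1 IHk.
move=> a b A B IHk1 IHk.
transitivity (a * (qpoch k * (1 - B)) * qpoch (n - k.+1) * (1 - A)
  + A * (1 - B) * (b * qpoch k * (qpoch (n - k.+1) * (1 - A)))); first by ring.
by rewrite IHk1 IHk; ring.
Qed.

End QBinomial.

Lemma signr_sqr_distn (R : pzRingType) (k N : nat) :
  (-1) ^+ (`|k - N| ^ 2)%N = (-1) ^+ k * (-1) ^+ N :> R.
Proof.
rewrite -exprD -signr_odd -[RHS]signr_odd oddX /= oddD.
by case: (leqP k N) => [le_kN|/ltnW le_Nk];
  [rewrite distnEr // oddB // addbC | rewrite distnEl // oddB].
Qed.

Lemma distn_sqrE (m n : nat) : (`|m - n| ^ 2)%N = (m%:Z - n%:Z) ^+ 2 :> int.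
Proof. by rewrite -natz natrX natz abszE -normrX ger0_norm ?sqr_ge0. Qed.

Lemma jacobi_exponent N k : (0 < N)%N -> (k <= 2 * N)%N ->
  ((2 * N - 1) * (2 * N - k) + 2 * 'C(k, 2) =
   2 * 'C(N, 2) + N * (2 * N - 1) + `|k - N| ^ 2)%N.
Proof.
move=> N_gt0 le_k2N.
have dbin n : (2 * 'C(n, 2) = n * n.-1)%N.
  by elim: n => // -[|n] IH //; rewrite binS bin1 mulnDr IH /=; lia.
rewrite !dbin.
apply/eqP; rewrite -eqz_nat !PoszD; apply/eqP.
have predE n : (n * n.-1)%N = n%:Z * (n%:Z - 1) :> int.
  by case: n => [|n] //=; rewrite PoszM -addn1 PoszD addrK.
by rewrite distn_sqrE !predE !PoszM -!subzn //; first ring; lia.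
Qed.

Section ThetaSeries.
Context {R : comNzRingType}.

Definition theta_tail (x : R) K := \sum_(j < K) x ^+ (j.+1 ^ 2).

Lemma sum_theta_sym (x : R) N :
  \sum_(0 <= k < (2 * N).+1) x ^+ (`|k - N| ^ 2) = 1 + 2 * theta_tail x N.
Proof.
rewrite (@big_cat_nat _ _ _ N) //=; last lia.
rewrite (@big_cat_nat _ _ _ N.+1 N) //=; last lia.
rewrite big_nat1 distnn expr0 big_nat_rev /= add0n (big_addn 0 _ N.+1).
have -> : ((2 * N).+1 - N.+1 = N)%N by lia.
have tailE : \sum_(0 <= i < N) x ^+ (`|(N - i.+1)%N - N| ^ 2) = theta_tail x N.
  rewrite big_mkord; apply: eq_bigr => i _.
  by rewrite distnEr ?leq_subr // subKn.
have headE : \sum_(0 <= i < N) x ^+ (`|(i + N.+1)%N - N| ^ 2) = theta_tail x N.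
  rewrite big_mkord; apply: eq_bigr => i _.
  by rewrite distnEl; [congr (x ^+ (_ ^ 2)) | ]; lia.
by rewrite tailE headE; ring.
Qed.

Lemma sqr_sum_mod2 (F : nat -> R) K :
  exists w, (\sum_(j < K) F j) ^+ 2 = \sum_(j < K) F j ^+ 2 + 2 * w.
Proof.
elim: K => [|K [w IH]]; first by exists 0; rewrite !big_ord0; ring.
exists (w + (\sum_(j < K) F j) * F K); rewrite !big_ord_recr /=.
by rewrite sqrrD IH; ring.
Qed.

Lemma theta_tail_sqr (x : R) K :
  exists w, theta_tail x K ^+ 2 = theta_tail (x ^+ 2) K + 2 * w.
Proof.
have [w ->] := sqr_sum_mod2 (fun j => x ^+ (j.+1 ^ 2)) K.
by exists w; congr (_ + _); apply: eq_bigr => j _; rewrite exprAC.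
Qed.

End ThetaSeries.

Section GaussIdentity.
Context {R : comNzRingType}.
Implicit Type d M N m : nat.

Definition oddpoch N : {poly R} := \prod_(0 <= i < N) (1 - 'X^(2 * i + 1)).

Lemma qpochXn_trunc d M m m' : (M <= m.+1 * d)%N -> (m <= m')%N ->
  trunc_eq M (qpoch ('X^d : {poly R}) m') (qpoch 'X^d m).
Proof.
move=> le_M le_mm'; rewrite /qpoch (big_cat_nat (leq0n m) le_mm') //=.
apply: trunc_eqMr1; apply: trunc_eq_prod1 => i; rewrite mem_index_iota => /andP [le_mi _].
rewrite -exprM; apply/trunc_eq_subXn/(leq_trans le_M).
by rewrite mulnC leq_mul2l ltnS le_mi orbT.
Qed.

Lemma qpochXn_coef0 d m : (0 < d)%N -> (qpoch ('X^d : {poly R}) m)`_0 = 1.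
Proof.
by move=> d_gt0; rewrite (qpochXn_trunc (M := 1) (m := 0)) ?mul1n // qpoch0 coef1.
Qed.

Lemma qpochX_double N : qpoch ('X : {poly R}) (2 * N) = oddpoch N * qpoch 'X^2 N.
Proof.
elim: N => [|N IH]; first by rewrite muln0 /oddpoch big_geq // !qpoch0 mulr1.
rewrite qpochS -exprM (_ : (2 * N.+1 = (2 * N).+2)%N); last lia.
rewrite !qpochS IH /oddpoch big_nat_recr //= -/(oddpoch N) addn1.
ring.
Qed.

Lemma prod_jacobi N : (0 < N)%N ->
  \prod_(0 <= i < 2 * N) ('X^(2 * N - 1) + (-1) * ('X^2) ^+ i) =
  (-1) ^+ N * 'X^(2 * 'C(N, 2) + N * (2 * N - 1)) * oddpoch N ^+ 2 :> {poly R}.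
Proof.
move=> N_gt0; rewrite (@big_cat_nat _ _ _ N) //=; last lia.
rewrite (big_addn 0 (2 * N) N) (_ : (2 * N - N = N)%N); last lia.
have lowE i : (0 <= i < N)%N -> 'X^(2 * N - 1) + (-1) * ('X^2) ^+ i =
    (-1) * 'X^(2 * i) * (1 - 'X^(2 * (0 + N - i.+1) + 1)) :> {poly R}.
  case/andP=> _ lt_iN; rewrite -exprM.
  rewrite (_ : (2 * N - 1 = 2 * i + (2 * (0 + N - i.+1) + 1))%N).
    by rewrite exprD; ring.
  lia.
have highE i : (0 <= i < N)%N -> 'X^(2 * N - 1) + (-1) * ('X^2) ^+ (i + N) =
    'X^(2 * N - 1) * (1 - 'X^(2 * i + 1)) :> {poly R}.
  case/andP=> _ lt_iN; rewrite -exprM (_ : (2 * (i + N) = 2 * N - 1 + (2 * i + 1))%N).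
    by rewrite exprD; ring.
  lia.
rewrite (eq_big_nat _ _ lowE) (eq_big_nat _ _ highE) !big_split /=.
have revE : \prod_(0 <= i < N) (1 - 'X^(2 * (0 + N - i.+1) + 1)) = oddpoch N.
  by rewrite /oddpoch [RHS]big_nat_rev.
rewrite revE -/(oddpoch N) !prodr_const_nat subn0 prodrXr -big_distrr /= bin2_sum.
by rewrite exprD -exprM (mulnC (2 * N - 1)%N); ring.
Qed.

Theorem jacobi_finite N :
  \sum_(0 <= k < (2 * N).+1) (- 'X) ^+ (`|k - N| ^ 2) * qbinom ('X^2) (2 * N) k =
  oddpoch N ^+ 2 :> {poly R}.
Proof.
have [->|N_gt0] := posnP N; first by rewrite big_nat1 qbinom0 /oddpoch big_geq.
set e := (2 * 'C(N, 2) + N * (2 * N - 1))%N.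
have h := qbinomial_theorem ('X^2 : {poly R}) ('X^(2 * N - 1)) (-1) (2 * N).
rewrite prod_jacobi // -/e in h.
apply: (monic_lreg (monicXn R e)).
have -> : 'X^e * oddpoch N ^+ 2 = (-1) ^+ N * ((-1) ^+ N * 'X^e * oddpoch N ^+ 2).
  by rewrite !mulrA -exprD -signr_odd addnn odd_double mul1r.
rewrite h mulr_sumr [RHS]mulr_sumr; apply: eq_big_nat => k /andP [_ lt_k].
have eX : 'X^((2 * N - 1) * (2 * N - k)) * 'X^(2 * 'C(k, 2)) =
    'X^e * 'X^(`|k - N| ^ 2) :> {poly R}.
  by rewrite -!exprD jacobi_exponent //; lia.
rewrite [(- 'X) ^+ _]exprNn signr_sqr_distn -!exprM.
transitivity ((-1) ^+ N * (-1) ^+ k * ('X^e * 'X^(`|k - N| ^ 2)) *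
  qbinom ('X^2 : {poly R}) (2 * N) k).
  by ring.
by rewrite -eX; ring.
Qed.

Lemma qbinomXn_trunc d M n k : (0 < d)%N -> (k <= n)%N ->
  (M <= k)%N -> (M <= n - k)%N ->
  trunc_eq M (qbinom ('X^d : {poly R}) n k * qpoch 'X^d M) 1.
Proof.
move=> d_gt0 le_kn le_Mk le_Mnk.
have toM m : (M <= m)%N -> trunc_eq M (qpoch ('X^d : {poly R}) m) (qpoch 'X^d M).
  move=> le_Mm; apply: qpochXn_trunc => //.
  exact: leq_trans (leqnSn M) (leq_pmulr _ d_gt0).
apply: (trunc_eq_cancel (qpochXn_coef0 M d_gt0)); rewrite mul1r.
apply: trunc_eq_trans (toM n (leq_trans le_Mk le_kn)).
rewrite -(qbinom_qpoch _ le_kn); apply: trunc_eqM (trunc_eq_sym (toM _ le_Mnk)).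
exact: trunc_eqM (trunc_eq_refl _) (trunc_eq_sym (toM _ le_Mk)).
Qed.

Theorem gauss_trunc M :
  trunc_eq M (oddpoch (2 * M) ^+ 2 * qpoch 'X^2 M) (1 + 2 * theta_tail (- 'X) (2 * M)).
Proof.
set N := (2 * M)%N; rewrite -jacobi_finite -sum_theta_sym big_distrl /=.
apply: trunc_eq_sum => k; rewrite mem_index_iota => /andP [_ lt_k2N].
have [lt_dM | le_Md] := ltnP (`|k - N| ^ 2) M.
  have lt_distM : (`|k - N| < M)%N.
    by apply: leq_ltn_trans lt_dM; rewrite -mulnn; nia.
  have [le_Mk le_MNk] : (M <= k)%N /\ (M <= 2 * N - k)%N.
    have [le_kN|/ltnW le_Nk] := leqP k N; move: lt_distM;
      [rewrite distnEr | rewrite distnEl]; rewrite // /N; lia.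
  rewrite -mulrA; apply: trunc_eqMr1; exact: qbinomXn_trunc.
have X0 (p : {poly R}) : trunc_eq M ((- 'X) ^+ (`|k - N| ^ 2) * p) 0.
  by rewrite exprNn -mulrA mulrCA; apply: trunc_eq_mulXn0.
rewrite -mulrA -[X in trunc_eq _ _ X]mulr1.
exact: trunc_eq_trans (X0 _) (trunc_eq_sym (X0 _)).
Qed.

End GaussIdentity.

Definition fps_poly N (a : fps) : {poly int} := \poly_(i < N) a i.

Lemma coef_fps_poly N a i : (i < N)%N -> (fps_poly N a)`_i = a i.
Proof. by move=> hi; rewrite coef_poly hi. Qed.

Lemma fps_polyD N a b :
  trunc_eq N (fps_poly N (fadd a b)) (fps_poly N a + fps_poly N b).
Proof. by move=> i hi; rewrite coefD !coef_fps_poly. Qed.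

Lemma fps_polyZ N c a :
  trunc_eq N (fps_poly N (fscale c a)) (c%:P * fps_poly N a).
Proof. by move=> i hi; rewrite coefCM !coef_fps_poly. Qed.

Lemma fps_polyC N c : trunc_eq N (fps_poly N (fconst c)) c%:P.
Proof. by move=> i hi; rewrite coefC coef_fps_poly. Qed.

Lemma fps_polyM N a b :
  trunc_eq N (fps_poly N (fmul a b)) (fps_poly N a * fps_poly N b).
Proof.
move=> i hi; rewrite coefM coef_fps_poly //; apply: eq_bigr => j _.
by rewrite !coef_fps_poly //; have := ltn_ord j; lia.
Qed.

Lemma fps_polyX N a e : trunc_eq N (fps_poly N (fpow a e)) (fps_poly N a ^+ e).
Proof.
elim: e => [|e IH]; first exact: fps_polyC.
rewrite exprS; apply: trunc_eq_trans (fps_polyM a (fpow a e)) _.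
exact: trunc_eqM (trunc_eq_refl _) IH.
Qed.

Lemma fps_poly_finv N (b : fps) : b 0%N = 1 ->
  trunc_eq N (fps_poly N (Defs.finv b) * fps_poly N b) 1.
Proof.
move=> b0; case: N => [//|N]; set B := fps_poly N.+1 b.
pose c : fps := fun m => fconst 1 m - b m.
have hc : trunc_eq N.+1 (fps_poly N.+1 c) (1 - B).
  by move=> i hi; rewrite coefB coef1 !coef_fps_poly // /c /fconst; case: eqP.
have powE j i : (i < N.+1)%N -> ((1 - B) ^+ j)`_i = fpow c j i.
  by move=> hi; rewrite -(trunc_eqX j hc hi) -(fps_polyX c j hi) coef_fps_poly.
have hB0 : (1 - B)`_0 = 0 by rewrite coefB coef1 coef_fps_poly ?b0 ?subrr.
have B0 : B`_0 = 1 by rewrite coef_fps_poly.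
apply: trunc_eq_trans (geometric_inverse B0).
apply: trunc_eqM (trunc_eq_refl _) => i hi.
rewrite coef_fps_poly // /Defs.finv -/c coef_sum.
rewrite (big_ord_widen N.+1 (fun j => fpow c j i)) //.
rewrite big_mkcond; apply: eq_bigr => j _; rewrite powE //.
by case: ltnP => // ij; rewrite -powE // coef_expr_small.
Qed.

Lemma fpow_coef0 (a : fps) e : fpow a e 0%N = a 0%N ^+ e.
Proof.
elim: e => [|e IH] //.
by rewrite exprS -IH /fpow iterS /fmul big_ord1.
Qed.

Lemma fps_eq_mod (m : nat) M (a b : fps) (T : {poly int}) n : (n < M)%N ->
  trunc_eq M (fps_poly M b) (fps_poly M a + m%:R * T) -> (a n == b n %[mod m])%Z.
Proof.
move=> lt_nM /(_ n lt_nM); rewrite coefD coef_natrM !coef_fps_poly // => ->.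
by rewrite addrC mulrC natz modzMDl.
Qed.

Lemma fps_poly_f k N : (0 < k)%N ->
  trunc_eq N (fps_poly N (f_ k)) (qpoch 'X^k N).
Proof.
move=> k_gt0 i lt_iN; rewrite coef_fps_poly // /f_ big_add1 /=.
rewrite (eq_bigr (fun j => 1 - ('X^k) ^+ j.+1)) => [|j _]; last by rewrite -exprM mulnC.
by rewrite (qpochXn_trunc (M := i.+1) (m := i) (m' := N)) ?leq_pmulr // ltnW.
Qed.

Lemma phiE n K : (n <= K)%N ->
  phi n = (n == 0%N)%:R + 2 * \sum_(j < K) ((j.+1 ^ 2)%N == n)%:R.
Proof.
move=> le_nK.
have thetaE : (theta_tail ('X : {poly int}) n)`_n = \sum_(j < K) ((j.+1 ^ 2)%N == n)%:R.
  rewrite coef_sum; under eq_bigr do rewrite coefXn eq_sym.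
  rewrite (big_ord_widen K (fun j => ((j.+1 ^ 2)%N == n)%:R)) // big_mkcond.
  apply: eq_bigr => j _; case: ltnP => // le_nj.
  by rewrite (_ : _ == n = false) //; apply/negbTE/eqP; nia.
rewrite -thetaE -coef_natrM -coef1 -coefD -sum_theta_sym coef_sum big_mkord.
rewrite /phi natr_sum; apply: eq_bigr => i _.
by rewrite coefXn -eqz_nat distn_sqrE eq_sym.
Qed.

Lemma fps_poly_fneg_phi N K : (N <= K)%N ->
  trunc_eq N (fps_poly N (fneg phi)) (1 + 2 * theta_tail (- 'X) K).
Proof.
move=> le_NK i lt_iN; rewrite coef_fps_poly // /fneg (phiE (K := K)); last first.
  exact: leq_trans (ltnW lt_iN) le_NK.
rewrite coefD coef1 coef_natrM coef_sum mulrDr mulrCA mulr_sumr.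
congr (_ + 2 * _); first by case: i {lt_iN} => [|i]; rewrite ?mul1r ?mulr0.
apply: eq_bigr => j _.
rewrite -scaleN1r exprZn coefZ coefXn eq_sym.
by case: eqP => [->|]; rewrite ?mulr1 ?mulr0.
Qed.

Lemma fps_poly_fdil_phi d N K : (0 < d)%N -> (N <= K)%N ->
  trunc_eq N (fps_poly N (fdil d phi)) (1 + 2 * theta_tail ('X^d) K).
Proof.
move=> d_gt0 le_NK i lt_iN; rewrite coef_fps_poly // /fdil coefD coef1 coef_natrM coef_sum.
have coefE j : (('X^d) ^+ (j.+1 ^ 2) : {poly int})`_i = (d * j.+1 ^ 2 == i)%N%:R.
  by rewrite -exprM coefXn eq_sym.
under eq_bigr do rewrite coefE.
case: (boolP (d %| i)%N) => [/dvdnP [q def_i] | ndvd]; last first.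
  rewrite big1 => [|j _]; last by case: eqP ndvd => // <-; rewrite dvdn_mulr.
  by case: eqP ndvd => // ->; rewrite dvdn0.
subst i; rewrite mulnK // (phiE (K := K)); last first.
  by rewrite (leq_trans _ le_NK) // (leq_trans _ (ltnW lt_iN)) // leq_pmulr.
rewrite muln_eq0 (gtn_eqF d_gt0) orbF; congr (_ + 2 * _); apply: eq_bigr => j _.
by rewrite [(d * _)%N]mulnC eqn_pmul2r.
Qed.

Lemma f_coef0 k : f_ k 0%N = 1.
Proof. by rewrite /f_ big_geq // coef1. Qed.

Lemma fps_poly_f1_sqr M : trunc_eq M (fps_poly M (f_ 1) ^+ 2)
  ((1 + 2 * theta_tail (- 'X) (2 * M)) * qpoch 'X^2 M).
Proof.
set E := qpoch ('X^2 : {poly int}) M.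
have toE m : (M <= m)%N -> trunc_eq M (qpoch ('X^2 : {poly int}) m) E.
  by move=> le_Mm; apply: qpochXn_trunc => //; lia.
have f1E : trunc_eq M (fps_poly M (f_ 1)) (oddpoch (2 * M) * E).
  apply: trunc_eq_trans (fps_poly_f (ltn0Sn 0)) _.
  apply: trunc_eq_trans (trunc_eq_sym (qpochXn_trunc (m' := 2 * (2 * M)) _ _)) _.
  - by rewrite muln1.
  - lia.
  by rewrite expr1 qpochX_double; apply: trunc_eqM (trunc_eq_refl _) (toE _ _); lia.
apply: trunc_eq_trans (trunc_eqX 2 f1E) _.
rewrite exprMn [E ^+ 2]expr2 mulrA.
by apply: trunc_eqM (trunc_eq_refl E); exact: gauss_trunc.
Qed.

Lemma fps_poly_rhs M : trunc_eq M
  (fps_poly M (fadd (fconst 21) (fadd (fscale 12 (fpow (fneg phi) 2))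
     (fadd (fscale 16 (fdil 2 phi)) (fscale 16 (fdil 4 phi))))))
  (21 + (12 * (1 + 2 * theta_tail (- 'X) (2 * M)) ^+ 2 +
    (16 * (1 + 2 * theta_tail 'X^2 (2 * M)) + 16 * (1 + 2 * theta_tail 'X^4 (2 * M))))).
Proof.
have le_M2M : (M <= 2 * M)%N by lia.
apply: trunc_eq_trans (fps_polyD _ _) (trunc_eqD _ _).
  by apply: trunc_eq_trans (fps_polyC _) _; rewrite polyC_natr.
apply: trunc_eq_trans (fps_polyD _ _) (trunc_eqD _ _).
  apply: trunc_eq_trans (fps_polyZ _ _) _; rewrite polyC_natr.
  apply: trunc_eqM (trunc_eq_refl _) _.
  exact: trunc_eq_trans (fps_polyX _ _) (trunc_eqX 2 (fps_poly_fneg_phi le_M2M)).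
apply: trunc_eq_trans (fps_polyD _ _) (trunc_eqD _ _);
  apply: trunc_eq_trans (fps_polyZ _ _) _; rewrite polyC_natr;
  exact: trunc_eqM (trunc_eq_refl _) (fps_poly_fdil_phi _ le_M2M).
Qed.

Lemma theta_mod64 (R : comNzRingType) (u u2 u4 w1 w2 : R) :
  u ^+ 2 = u2 + 2 * w1 -> u2 ^+ 2 = u4 + 2 * w2 ->
  exists t, (1 + 2 * u) ^+ 8 *
    (21 + (12 * (1 + 2 * u) ^+ 2 + (16 * (1 + 2 * u2) + 16 * (1 + 2 * u4)))) = 1 + 64 * t.
Proof.
move=> sq_u sq_u2.
have -> : u4 = u2 ^+ 2 - 2 * w2 by rewrite sq_u2; ring.
have -> : u2 = u ^+ 2 - 2 * w1 by rewrite sq_u; ring.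
(* The first summand of [t] is the quotient of
   [(1 + 2u)^8 (53 + 12 (1 + 2u)^2 + 32 u^2 + 32 u^4) - 1] by 64 in Z[u]. *)
exists (1 + 17 * u + 127 * u ^+ 2 + 559 * u ^+ 3 + 1614 * u ^+ 4 + 3228 * u ^+ 5
      + 4620 * u ^+ 6 + 4848 * u ^+ 7 + 3828 * u ^+ 8 + 2368 * u ^+ 9 + 1216 * u ^+ 10
      + 512 * u ^+ 11 + 128 * u ^+ 12
      - (1 + 2 * u) ^+ 8 * (w1 + 2 * u ^+ 2 * w1 - 2 * w1 ^+ 2 + w2)).
ring.
Qed.

Lemma fps_poly_f1_pow16 M : trunc_eq M (fps_poly M (fpow (f_ 1) 16))
  ((1 + 2 * theta_tail (- 'X) (2 * M)) ^+ 8 * qpoch 'X^2 M ^+ 8).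
Proof.
rewrite -exprMn; apply: trunc_eq_trans (fps_polyX _ _) _.
by rewrite (exprM _ 2 8); apply: trunc_eqX; exact: fps_poly_f1_sqr.
Qed.

Lemma fps_poly_f2_pow8 M : trunc_eq M (fps_poly M (fpow (f_ 2) 8)) (qpoch 'X^2 M ^+ 8).
Proof. exact: trunc_eq_trans (fps_polyX _ _) (trunc_eqX 8 (fps_poly_f (k := 2) isT)). Qed.

Theorem mainTheorem7 : forall n : nat,
  (fdiv (fpow (f_ 2) 8) (fpow (f_ 1) 16) n ==
   fadd (fconst 21)
     (fadd (fscale 12 (fpow (fneg phi) 2))
        (fadd (fscale 16 (fdil 2 phi)) (fscale 16 (fdil 4 phi)))) n
   %[mod 64])%Z.
Proof.
move=> n; set M := n.+1.
have [w1 sq_u] := theta_tail_sqr (- 'X : {poly int}) (2 * M).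
have [w2 sq_u2] := theta_tail_sqr ('X^2 : {poly int}) (2 * M).
rewrite sqrrN in sq_u; rewrite -exprM in sq_u2.
have [t x8R] := theta_mod64 sq_u sq_u2.
set x := 1 + 2 * theta_tail (- 'X) (2 * M) in x8R *.
set E := qpoch ('X^2 : {poly int}) M; set B := fpow (f_ 1) 16.
set I := fps_poly M (Defs.finv B).
have powB : trunc_eq M (fps_poly M B) (x ^+ 8 * E ^+ 8) by exact: fps_poly_f1_pow16.
have invB : trunc_eq M (I * (x ^+ 8 * E ^+ 8)) 1.
  apply: trunc_eq_trans (trunc_eqM (trunc_eq_refl I) (trunc_eq_sym powB)) _.
  by apply: fps_poly_finv; rewrite /B fpow_coef0 f_coef0 expr1n.
have lhsE : trunc_eq M (fps_poly M (fdiv (fpow (f_ 2) 8) B)) (E ^+ 8 * I).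
  apply: trunc_eq_trans (fps_polyM _ _) (trunc_eqM _ (trunc_eq_refl I)).
  exact: fps_poly_f2_pow8.
apply: (@fps_eq_mod 64 M _ _ (E ^+ 8 * I * t) _ (ltnSn n)).
apply: trunc_eq_trans; first exact: fps_poly_rhs.
apply: trunc_eq_trans (trunc_eq_sym (trunc_eqMr1 _ invB)) _.
have -> (r : {poly int}) : r * (I * (x ^+ 8 * E ^+ 8)) = E ^+ 8 * I * (x ^+ 8 * r).
  by ring.
rewrite x8R mulrDr mulr1 mulrCA.
exact: trunc_eqD (trunc_eq_sym lhsE) (trunc_eq_refl _).
Qed.
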